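(* Let $P$ be a finite graded connected poset with rank function $\rho$, let $G$ be a group of automorphisms of $P$, and let $\theta$ be the equivalence relation whose classes are the $G$-orbits. Then (1) $\rho(p)=\rho(q)$ whenever $p\,\theta\,q$; and (2) the quotient $P/G:=(P/\theta,\leqslant_\theta)$ is a graded poset (with rank function $[p]\mapsto\rho(p)$).
   Context: A poset is graded if there is an integer-valued rank function $\rho$ with $p<q\Rightarrow\rho(p)<\rho(q)$ and $p\lessdot q\Rightarrow\rho(q)=\rho(p)+1$, where $p\lessdot q$ means $p<q$ with nothing strictly between. A poset is connected if its Hasse diagram (the graph with vertices $P$ and an edge for each covering relation) is connected. For an equivalence relation $\theta$ with classes $[p]$, $[p]\leqslant_\theta[q]$ iff there exist $p'\in[p]$, $q'\in[q]$ with $p'\leqslant q'$. *)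

From mathcomp Require Import all_boot all_order all_fingroup all_algebra.
Set Implicit Arguments. Unset Strict Implicit. Unset Printing Implicit Defensive.
Import Order.Theory GRing.Theory.

Section RelPoset.
Variable U : finType.
Variable D : {set U}.
Variable r : rel U.

Definition poset_on : Prop :=
  [/\ {in D, forall x, r x x},
      {in D &, forall x y, r x y -> r y x -> x = y} &
      {in D & &, forall x y z, r x y -> r y z -> r x z}].

Definition covers_on (x y : U) : bool :=
  [&& x \in D, y \in D, r x y, x != y &
      [forall z in D, ~~ [&& r x z, r z y, z != x & z != y]]].

Definition rank_fun_on (rho : U -> int) : Prop :=
  (forall x y, x \in D -> y \in D -> r x y -> x != y -> (rho x < rho y)%R) /\
  (forall x y, covers_on x y -> rho y = (rho x + 1)%R).

Definition graded_on : Prop := exists rho, rank_fun_on rho.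
End RelPoset.

Definition Prel {d} {T : finPOrderType d} : rel T := fun x y => (x <= y)%O.

Definition covers {d} {T : finPOrderType d} (x y : T) : bool :=
  covers_on [set: T] Prel x y.

Definition rank_fun {d} {T : finPOrderType d} (rho : T -> int) : Prop :=
  rank_fun_on [set: T] Prel rho.

Definition hasse_connected {d} {T : finPOrderType d} : Prop :=
  forall x y : T, connect (fun a b => covers a b || covers b a) x y.

Definition automorphism_group {d} {T : finPOrderType d} (G : {group {perm T}}) : Prop :=
  forall g, g \in G -> forall x y : T, (g x <= g y)%O = (x <= y)%O.

Definition theta_classes {d} {T : finPOrderType d} (G : {group {perm T}}) : {set {set T}} :=
  [set orbit 'P G x | x : T].

Definition le_theta {d} {T : finPOrderType d} : rel {set T} :=
  fun A B => [exists p in A, exists q in B, (p <= q)%O].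

Definition class_rank {T : finType} (rho : T -> int) (A : {set T}) : int :=
  if [pick x in A] is Some x then rho x else 0%R.

From mathcomp Require Import all_boot all_order all_fingroup all_algebra.
From mathcomp Require Import zify.
Import Order.Theory GRing.Theory Num.Theory.
Set Implicit Arguments. Unset Strict Implicit.

(* Let P be a finite poset with rank function rho and G a group of order
   automorphisms of P.
   (1) An automorphism g maps covers to covers, so along every edge of the
       Hasse diagram the shift rho (g x) - rho x is unchanged; if the diagram
       is connected the shift is a constant c.  Summing rho (g x) = rho x + c
       over the finite set P, which g permutes, forces c = 0.  Hence rho is
       constant on G-orbits.
   (2) Given only that rho is constant on orbits, the orbit relation
       [p] <= [q] (some p' ~ p, q' ~ q with p' <= q') is a partial order:
       antisymmetry follows from rank monotonicity and transitivity from
       translating witnesses by an element of G.  It is strictly monotone in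
       the induced rank, and if [p] < [q] is a cover then, choosing p < q and
       a cover z <. q above p, the class [z] lies between [p] and [q], so it
       must be [p]; hence rank [q] = rank [z] + 1 = rank [p] + 1. *)

Lemma coversE d (T : finPOrderType d) (x y : T) : covers x y =
  [&& (x <= y)%O, x != y &
      [forall z, ~~ [&& (x <= z)%O, (z <= y)%O, z != x & z != y]]].
Proof.
rewrite /covers /covers_on !in_setT /=; congr [&& _, _ & _].
by apply/eq_forallb => z; rewrite in_setT.
Qed.

Lemma covers_lt d (T : finPOrderType d) (x y : T) : covers x y -> (x < y)%O.
Proof. by rewrite coversE lt_def eq_sym => /and3P[-> -> _]. Qed.

Lemma connect_const (T : finType) (U : Type) (e : rel T) (f : T -> U) :
  (forall x y, e x y -> f x = f y) -> forall x y, connect e x y -> f x = f y.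
Proof.
move=> fe x y /connectP[p Hp ->]; elim: p x Hp => [|a p IH] x //=.
by case/andP=> /fe -> /IH.
Qed.

(* A permutation cannot shift a real-valued function by a constant c other
   than 0: compare the sums of f and f \o g over the (nonempty) domain. *)
Lemma perm_shift_eq0 (R : numDomainType) (T : finType) (g : {perm T})
    (f : T -> R) (c : R) :
  (forall x, f (g x) = f x + c)%R -> T -> c = 0%R.
Proof.
move=> fg x0.
have sum_fg : (\sum_y f (g y) = \sum_y f y)%R.
  by rewrite [RHS](reindex_inj (@perm_inj _ g)).
move: sum_fg; under eq_bigr do rewrite fg.
rewrite big_split /= sumr_const => /eqP; rewrite -subr_eq0 addrAC subrr add0r.
rewrite mulrn_eq0 => /orP[|/eqP //].
have : 0 < #|T| by apply/card_gt0P; exists x0.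
by rewrite lt0n => /negPf ->.
Qed.

Section Ranked.
Variables (d : Order.disp_t) (T : finPOrderType d) (rho : T -> int).
Hypothesis rank_rho : rank_fun rho.

Lemma rank_lt (x y : T) : (x < y)%O -> (rho x < rho y)%R.
Proof. by rewrite lt_def => /andP[ne le]; apply: rank_rho.1; rewrite ?in_setT // eq_sym. Qed.

Lemma rank_le (x y : T) : (x <= y)%O -> (rho x <= rho y)%R.
Proof. by rewrite le_eqVlt => /orP[/eqP -> // | /rank_lt /ltW]. Qed.

Lemma rank_cover (x y : T) : covers x y -> rho y = (rho x + 1)%R.
Proof. exact: rank_rho.2. Qed.

Lemma le_rank_eq (x y : T) : (x <= y)%O -> rho x = rho y -> x = y.
Proof.
by rewrite le_eqVlt => /orP[/eqP // | /rank_lt + e]; rewrite e ltxx.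
Qed.

(* Below any q, above any z < q, sits an element covered by q; the proof
   refines z upwards, with the rank gap to q as termination measure. *)
Lemma exists_cover (z q : T) : (z < q)%O -> exists2 z', (z <= z')%O & covers z' q.
Proof.
move: {2}`|rho q - rho z|%N (leqnn `|rho q - rho z|%N) => n.
elim: n z => [|n IH] z gap zq; first by have := rank_lt zq; lia.
have [czq|] := boolP (covers z q); first by exists z.
rewrite coversE (ltW zq) (lt_eqF zq) /= negb_forall => /existsP[w].
rewrite negbK => /and4P[zw wq wz wq'].
have zw' : (z < w)%O by rewrite lt_def wz zw.
have wq2 : (w < q)%O by rewrite lt_def eq_sym wq' wq.
have [|z' wz' cz'] := IH w _ wq2; first by have := rank_lt zw'; have := rank_lt wq2; lia.
by exists z' => //; apply: le_trans wz'; apply: ltW.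
Qed.

End Ranked.

Section Automorphism.
Variables (d : Order.disp_t) (T : finPOrderType d) (g : {perm T}).
Hypothesis g_auto : forall x y : T, (g x <= g y)%O = (x <= y)%O.

Lemma perm_covers (x y : T) : covers x y -> covers (g x) (g y).
Proof.
rewrite !coversE g_auto (inj_eq perm_inj) => /and3P[-> -> /forallP nobetween].
apply/forallP => z; rewrite -(permKV g z).
by rewrite !g_auto !(inj_eq perm_inj); apply: nobetween.
Qed.

Lemma rank_perm (rho : T -> int) :
  rank_fun rho -> hasse_connected (T := T) -> forall x, rho (g x) = rho x.
Proof.
move=> rank_rho conn x.
pose shift y := (rho (g y) - rho y)%R.
have shift_edge a b : covers a b || covers b a -> shift a = shift b.
  by rewrite /shift => /orP[] /[dup] /(rank_cover rank_rho) + /perm_covers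
    /(rank_cover rank_rho); lia.
have shift_const y : shift y = shift x.
  by apply/esym/(connect_const shift_edge)/conn.
have /perm_shift_eq0/(_ x) : forall y, rho (g y) = (rho y + shift x)%R.
  by move=> y; rewrite -(shift_const y) /shift; lia.
by rewrite /shift; lia.
Qed.

End Automorphism.

Section Quotient.
Variables (d : Order.disp_t) (T : finPOrderType d) (rho : T -> int)
  (G : {group {perm T}}).
Hypotheses (rank_rho : rank_fun rho) (G_auto : automorphism_group G).
Hypothesis rank_orbit : forall p q : T, q \in orbit 'P G p -> rho p = rho q.

Let classes := theta_classes G.

Lemma class_orbit A x : A \in classes -> x \in A -> A = orbit 'P G x.
Proof. by case/imsetP=> y _ -> xA; apply/esym/orbit_eqP. Qed.

Lemma class_eq A B x : A \in classes -> B \in classes -> x \in A -> x \in B -> A = B.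
Proof. by move=> HA HB xA xB; rewrite (class_orbit HA xA) (class_orbit HB xB). Qed.

Lemma class_neq A B p q : A \in classes -> B \in classes ->
  p \in A -> q \in B -> A != B -> q != p.
Proof.
move=> HA HB pA qB; apply: contraNneq => qp.
by apply/eqP/(class_eq HA HB pA); rewrite -qp.
Qed.

Lemma class_rankE A x : A \in classes -> x \in A -> class_rank rho A = rho x.
Proof.
move=> HA xA; rewrite /class_rank (class_orbit HA xA).
by case: pickP => [z /rank_orbit -> // | /(_ x)]; rewrite orbit_refl.
Qed.

Lemma le_thetaP (A B : {set T}) :
  reflect (exists p q, [/\ p \in A, q \in B & (p <= q)%O]) (le_theta A B).
Proof.
apply: (iffP existsP) => [[p /andP[pA /existsP[q /andP[qB pq]]]] | [p [q [pA qB pq]]]].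
  by exists p, q.
by exists p; rewrite pA; apply/existsP; exists q; rewrite qB.
Qed.

(* Transitivity: translate the witnesses of the first comparison by the
   element of G matching the two representatives in the middle class. *)
Lemma le_theta_trans : {in classes & &, forall A B C,
  le_theta A B -> le_theta B C -> le_theta A C}.
Proof.
move=> A B C HA HB _ /le_thetaP[p [q [pA qB pq]]] /le_thetaP[q' [r [q'B rC qr]]].
have : q' \in orbit 'P G q by rewrite -(class_orbit HB qB).
case/orbitP=> g gG; rewrite /= apermE => q'E; subst q'.
apply/le_thetaP; exists (g p), r; split=> //; last by rewrite (le_trans _ qr) ?G_auto.
by rewrite (class_orbit HA pA); apply/orbitP; exists g.
Qed.

(* Antisymmetry: the ranks of the four witnesses are squeezed together, so
   the first comparison is between elements of equal rank. *)
Lemma le_theta_anti : {in classes &, forall A B,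
  le_theta A B -> le_theta B A -> A = B}.
Proof.
move=> A B HA HB /le_thetaP[p [q [pA qB pq]]] /le_thetaP[p' [q' [p'B q'A pq']]].
have rank_pq := rank_le rank_rho pq.
have := rank_le rank_rho pq'.
rewrite -(class_rankE HB p'B) (class_rankE HB qB) -(class_rankE HA q'A) (class_rankE HA pA).
move=> rank_qp; have {}pq : p = q by apply: (le_rank_eq rank_rho pq); lia.
by apply: (class_eq HA HB pA); rewrite pq.
Qed.

Lemma quotient_poset : poset_on classes le_theta.
Proof.
split; [|exact: le_theta_anti | exact: le_theta_trans].
by move=> A /imsetP[x _ ->]; apply/le_thetaP; exists x, x; rewrite orbit_refl.
Qed.

Lemma quotient_rank_lt A B : A \in classes -> B \in classes ->
  le_theta A B -> A != B -> (class_rank rho A < class_rank rho B)%R.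
Proof.
move=> HA HB /le_thetaP[p [q [pA qB pq]]] nAB.
rewrite (class_rankE HA pA) (class_rankE HB qB) rank_lt // lt_def pq andbT.
exact: class_neq nAB.
Qed.

(* Covers in the quotient raise the induced rank by one: the class of an
   element covered by q is squeezed between A and B, and cannot be B. *)
Lemma quotient_rank_cover A B :
  covers_on classes le_theta A B -> class_rank rho B = (class_rank rho A + 1)%R.
Proof.
case/and5P=> HA HB /le_thetaP[p [q [pA qB pq]]] nAB /forallP nobetween.
have plq : (p < q)%O.
  by rewrite lt_def pq andbT (class_neq HA HB pA qB nAB).
have [z pz czq] := exists_cover rank_rho plq.
pose C := orbit 'P G z.
have HC : C \in classes by apply/imsetP; exists z.
have zC : z \in C by rewrite orbit_refl.
have AC : le_theta A C by apply/le_thetaP; exists p, z.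
have CB : le_theta C B by apply/le_thetaP; exists z, q; rewrite (ltW (covers_lt czq)).
have := nobetween C; rewrite HC AC CB /= negb_and !negbK => /orP[/eqP CA | /eqP CB'].
  by rewrite -CA (class_rankE HC zC) (class_rankE HB qB) (rank_cover rank_rho czq).
have := rank_lt rank_rho (covers_lt czq).
by rewrite -(class_rankE HC zC) -(class_rankE HB qB) CB' ltxx.
Qed.

Lemma quotient_graded : rank_fun_on classes le_theta (class_rank rho).
Proof.
by split=> [A B HA HB|A B]; [exact: quotient_rank_lt | exact: quotient_rank_cover].
Qed.

End Quotient.

Theorem mainTheorem11 (d : Order.disp_t) (T : finPOrderType d)
    (rho : T -> int) (G : {group {perm T}}) :
  rank_fun rho -> hasse_connected (T := T) -> automorphism_group G ->
  (forall p q : T, q \in orbit 'P G p -> rho p = rho q) /\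
  (poset_on (theta_classes G) le_theta /\
   rank_fun_on (theta_classes G) le_theta (class_rank rho)).
Proof.
move=> rank_rho conn G_auto.
have rank_orbit p q : q \in orbit 'P G p -> rho p = rho q.
  by case/orbitP=> g gG <-; rewrite /= apermE (rank_perm (G_auto g gG) rank_rho conn).
split=> //; split.
- exact: quotient_poset rank_rho G_auto rank_orbit.
- exact: quotient_graded rank_rho rank_orbit.
Qed.
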